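(* Let $G$ be a connected graph of order $n\geq 9$ such that $d(u)+d(v)\geq n-2$ for every pair of non-adjacent vertices $u,v\in V(G)$. Then $prc(G)=\chi'(G)$.
   Context: A path in an edge-coloured graph is a rainbow path if its edges receive pairwise distinct colours. The proper rainbow connection number $prc(G)$ of a connected graph is the minimum number of colours in a proper edge-colouring (adjacent edges get distinct colours) such that every two distinct vertices are joined by a rainbow path. $\chi'(G)$ is the chromatic index; $d(u)$ is the degree of $u$. *)

From mathcomp Require Import all_boot.
Set Implicit Arguments. Unset Strict Implicit. Unset Printing Implicit Defensive.

Definition simple_graph (T : finType) (e : rel T) : Prop :=
  symmetric e /\ irreflexive e.

Definition connected_graph (T : finType) (e : rel T) : Prop :=
  forall x y : T, connect e x y.

Definition deg (T : finType) (e : rel T) (u : T) : nat := #|[set v | e u v]|.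

(* An edge colouring is a function c on ordered pairs, required to be
   symmetric on edges (so it is a colouring of unordered edges {x,y}).
   It uses (at most) k colours, namely 0..k-1. *)
Definition edge_colouring (T : finType) (e : rel T) (k : nat)
    (c : T -> T -> nat) : Prop :=
  forall x y, e x y -> c x y = c y x /\ c x y < k.

Definition proper_colouring (T : finType) (e : rel T) (c : T -> T -> nat) : Prop :=
  forall x y z, e x y -> e x z -> y != z -> c x y != c x z.

Definition rainbow_path (T : finType) (e : rel T) (c : T -> T -> nat)
    (x y : T) (p : seq T) : Prop :=
  [/\ path e x p, last x p = y, uniq (x :: p) & uniq (pairmap c x p)].

Definition rainbow_connected (T : finType) (e : rel T) (c : T -> T -> nat) : Prop :=
  forall x y : T, x != y -> exists p : seq T, rainbow_path e c x y p.

Definition proper_k_colourable (T : finType) (e : rel T) (k : nat) : Prop :=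
  exists c, edge_colouring e k c /\ proper_colouring e c.

Definition proper_rainbow_k (T : finType) (e : rel T) (k : nat) : Prop :=
  exists c, [/\ edge_colouring e k c, proper_colouring e c & rainbow_connected e c].

Definition is_least (P : nat -> Prop) (k : nat) : Prop :=
  P k /\ forall j, P j -> k <= j.

Definition is_chromatic_index (T : finType) (e : rel T) (k : nat) : Prop :=
  is_least (proper_k_colourable e) k.

Definition is_prc (T : finType) (e : rel T) (k : nat) : Prop :=
  is_least (proper_rainbow_k e) k.

(* Every proper edge colouring is already rainbow connecting, so prc(G) and
   chi'(G) are both the least number of colours of a proper edge colouring.
   Only non-adjacent x, y without common neighbour need an argument.  Ore's
   condition then forces N(x) and N(y) to partition V - {x, y}, and
   connectivity yields an edge ab with a in N(x), b in N(y).  If there were no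
   rainbow x-y path, the paths xaby, xab'y and xa'aby would give
   c(xa) = c(by), make b the only neighbour of a in N(y), and force
   c(xa') = c(ab) for every neighbour a' of a in N(x); hence d(a) <= 3, and
   d(b) <= 3 by reversing paths.  Ore's condition at the non-adjacent pairs
   (a, y) and (b, x) then gives 2n - 4 <= 6 + d(x) + d(y) <= n + 4, so n <= 8. *)

From mathcomp Require Import all_boot zify.
From Stdlib Require Import Classical.

Set Implicit Arguments.
Unset Strict Implicit.
Unset Printing Implicit Defensive.

Lemma last_rev_belast {A : Type} (x : A) s : last (last x s) (rev (belast x s)) = x.
Proof. by rewrite -(last_cons x) -rev_rcons -lastI rev_cons last_rcons. Qed.

Lemma rev_pairmap {A B : Type} (f : A -> A -> B) x s :
  rev (pairmap f x s) = pairmap (fun u v => f v u) (last x s) (rev (belast x s)).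
Proof.
elim: s x => //= y s IHs x.
by rewrite rev_cons IHs rev_cons -!cats1 pairmap_cat /= last_rev_belast.
Qed.

Lemma path_crossing (T : eqType) (e : rel T) (A : {pred T}) x p :
  path e x p -> x \in A -> last x p \notin A ->
  exists2 a, a \in A & exists2 b, b \notin A & e a b.
Proof.
elim: p x => [|y p IHp] x /=; first by move=> _ ->.
move=> /andP[exy yp] xA; have [/(IHp y yp)//|yA _] := boolP (y \in A).
by exists x => //; exists y.
Qed.

Lemma is_least_exists (P : nat -> Prop) : (exists n, P n) -> exists k, is_least P k.
Proof.
move=> [n]; elim/ltn_ind: n => n IHn Pn.
have [[m [mn Pm]]|n_min] := classic (exists m, m < n /\ P m); first exact: IHn Pm.
by exists n; split=> // m Pm; rewrite leqNgt; apply/negP => mn; apply: n_min; exists m.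
Qed.

Lemma proper_k_colourable_exists (T : finType) (e : rel T) :
  exists k, proper_k_colourable e k.
Proof.
exists (#|T| + #|T|), (fun x y => enum_rank x + enum_rank y); split.
  by move=> x y _; split; [exact: addnC | rewrite -addSn leq_add // ltnW].
by move=> x y z _ _; rewrite eqn_add2l; apply: contra => /eqP/ord_inj/enum_rank_inj->.
Qed.

Section DisjointNbrs.

Variables (T : finType) (e : rel T) (x y : T).
Hypotheses (e_sym : symmetric e) (e_irr : irreflexive e).
Hypotheses (x_neq_y : x != y) (xy_nonadj : ~~ e x y) (nbr_disj : forall w, e x w -> ~~ e y w).

Lemma card_closed_nbrs :
  #|x |: (y |: ([set w | e x w] :|: [set w | e y w]))| = deg e x + deg e y + 2.
Proof.
have disj : [disjoint [set w | e x w] & [set w | e y w]].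
  by apply/pred0P => w /=; rewrite !inE; case exw: (e x w) => //=; exact/negbTE/nbr_disj.
have card_nbrs : #|[set w | e x w] :|: [set w | e y w]| = deg e x + deg e y.
  by have := leq_card_setU [set w | e x w] [set w | e y w]; rewrite disj => -[_ /eqP].
rewrite !cardsU1 card_nbrs !inE !negb_or x_neq_y (negbTE xy_nonadj) e_sym !e_irr.
by rewrite (negbTE xy_nonadj) /=; lia.
Qed.

Lemma deg_disjoint_nbrs : deg e x + deg e y + 2 <= #|T|.
Proof. by rewrite -card_closed_nbrs max_card. Qed.

Lemma ore_cover : #|T| - 2 <= deg e x + deg e y ->
  forall w, w != x -> w != y -> e x w || e y w.
Proof.
move=> ore_xy w wx wy.
have /eqP closed_nbrsT : x |: (y |: ([set w | e x w] :|: [set w | e y w])) == setT.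
  by rewrite eqEcard subsetT cardsT card_closed_nbrs; lia.
by move: (in_setT w); rewrite -closed_nbrsT !inE (negbTE wx) (negbTE wy).
Qed.

Lemma nonadjacent_bridge : #|T| - 2 <= deg e x + deg e y -> connect e x y ->
  exists a b, [/\ e x a, e a b & e b y].
Proof.
move=> /ore_cover cover /connectP[p xp lp].
pose A := [pred w | (w == x) || e x w].
have xA : x \in A by rewrite inE eqxx.
have yA : last x p \notin A by rewrite -lp inE negb_or eq_sym x_neq_y.
have [a] := path_crossing xp xA yA.
case/orP=> [/eqP-> [b]|exa [b]]; rewrite inE negb_or => /andP[bx nexb] eab.
  by rewrite eab in nexb.
exists a, b; split=> //.
have b_neq_y : b != y by apply: contraNneq (nbr_disj exa) => <-; rewrite e_sym.
by move: (cover b bx b_neq_y); rewrite (negbTE nexb) e_sym.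
Qed.

End DisjointNbrs.

Section ProperColouring.

Variables (T : finType) (e : rel T) (c : T -> T -> nat).
Hypotheses (e_sym : symmetric e) (e_irr : irreflexive e).
Hypotheses (c_sym : forall x y, e x y -> c x y = c y x) (c_proper : proper_colouring e c).

Lemma edge_neq x y : e x y -> x != y.
Proof. by apply: contraTneq => ->; rewrite e_irr. Qed.

Lemma proper_consecutive u v w : e u v -> e v w -> u != w -> c u v != c v w.
Proof. by move=> euv evw uw; rewrite c_sym //; apply: c_proper; rewrite // e_sym. Qed.

Lemma pairmap_flip_path x p :
  path e x p -> pairmap (fun u v => c v u) x p = pairmap c x p.
Proof. by elim: p x => //= y p IHp x /andP[exy /IHp ->]; rewrite (c_sym exy). Qed.

Lemma rainbow_path_rev x y p :
  rainbow_path e c x y p -> rainbow_path e c y x (rev (belast x p)).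
Proof.
case=> xp <- xp_uniq cp_uniq; split.
- by rewrite rev_path (eq_path (fun u v => e_sym v u)).
- exact: last_rev_belast.
- by rewrite -rev_rcons -lastI rev_uniq.
- have := rev_pairmap (fun u v => c v u) x p.
  by rewrite (pairmap_flip_path xp) => <-; rewrite rev_uniq.
Qed.

Lemma rainbow_path_edge x y : e x y -> rainbow_path e c x y [:: y].
Proof. by move=> exy; split; rewrite /= ?exy ?inE ?edge_neq. Qed.

Lemma rainbow_path_common_nbr x w y :
  e x w -> e w y -> x != y -> rainbow_path e c x y [:: w; y].
Proof.
move=> exw ewy xy; split; rewrite /= ?exw ?ewy //.
  by rewrite !inE negb_or xy !edge_neq.
by rewrite inE proper_consecutive.
Qed.

Section NonadjacentPair.

Variables x y : T.
Hypotheses (x_neq_y : x != y) (xy_nonadj : ~~ e x y) (nbr_disj : forall w, e x w -> ~~ e y w).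

Lemma rainbow_path3 u v :
  e x u -> e u v -> e v y -> c x u != c v y -> rainbow_path e c x y [:: u; v; y].
Proof.
move=> exu euv evy cxu_vy.
have xv : x != v by apply: contraNneq xy_nonadj => ->.
have uy : u != y by apply: contraNneq xy_nonadj => <-.
split; rewrite /= ?exu ?euv ?evy //.
  by rewrite !inE !negb_or x_neq_y xv uy !edge_neq.
by rewrite !inE !negb_or cxu_vy !proper_consecutive.
Qed.

Lemma rainbow_path4 u v w :
  e x u -> e u v -> e v w -> e w y -> e x v ->
  c x u != c v w -> c x u != c w y -> c u v != c w y ->
  rainbow_path e c x y [:: u; v; w; y].
Proof.
move=> exu euv evw ewy exv cxu_vw cxu_wy cuv_wy.
have xw : x != w by apply: contraNneq xy_nonadj => ->.
have uy : u != y by apply: contraNneq xy_nonadj => <-.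
have vy : v != y by apply: contraNneq xy_nonadj => <-.
have uw : u != w by apply: contraTneq ewy => <-; rewrite e_sym nbr_disj.
have xv := edge_neq exv.
split; rewrite /= ?exu ?euv ?evw ?ewy //.
  by rewrite !inE !negb_or x_neq_y xw uy uw vy !edge_neq.
by rewrite !inE !negb_or cxu_vw cxu_wy cuv_wy !proper_consecutive.
Qed.

Section CrossingEdge.

Variables a b : T.
Hypotheses (exa : e x a) (eab : e a b) (eby : e b y).
Hypothesis cover : forall w, w != x -> w != y -> e x w || e y w.
Hypothesis no_rainbow : forall p, ~ rainbow_path e c x y p.

Lemma crossing_colour : c x a = c b y.
Proof.
have [//|ne] := eqVneq (c x a) (c b y).
by case: (no_rainbow (rainbow_path3 exa eab eby ne)).
Qed.

Lemma crossing_nbr_unique b' : e y b' -> e a b' -> b' = b.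
Proof.
move=> eyb' eab'; have [//|b'b] := eqVneq b' b.
have eb'y : e b' y by rewrite e_sym.
case: (no_rainbow (rainbow_path3 exa eab' eb'y _)).
rewrite crossing_colour (c_sym eby) (c_sym eb'y); apply: c_proper; rewrite // 1?e_sym //.
by rewrite eq_sym.
Qed.

Lemma crossing_nbr_colour a' : e x a' -> e a' a -> c x a' = c a b.
Proof.
move=> exa' ea'a; have [//|ne] := eqVneq (c x a') (c a b).
case: (no_rainbow (rainbow_path4 exa' ea'a eab eby exa ne _ _)).
  by rewrite -crossing_colour; apply: c_proper; rewrite // edge_neq.
rewrite -crossing_colour (c_sym ea'a) (c_sym exa); apply: c_proper; rewrite 1?e_sym //.
by rewrite eq_sym edge_neq.
Qed.

Lemma crossing_deg_le3 : deg e a <= 3.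
Proof.
set S := [set w | e x w & c x w == c a b].
have S_le1 : #|S| <= 1.
  apply/card_le1_eqP => w1 w2; rewrite !inE => /andP[exw1 /eqP c1] /andP[exw2 /eqP c2].
  by apply/eqP/negPn/negP => w12; have := c_proper exw2 exw1 w12; rewrite c1 c2 eqxx.
have sub : [set w | e a w] \subset [set x; b] :|: S.
  apply/subsetP => w; rewrite !inE => eaw.
  have [//|wx] := eqVneq w x.
  have wy : w != y by apply: contraTneq eaw => ->; rewrite e_sym nbr_disj.
  case/orP: (cover wx wy) => [exw|eyw].
    by rewrite exw crossing_nbr_colour ?eqxx ?orbT // e_sym.
  by rewrite (crossing_nbr_unique eyw eaw) eqxx orbT.
rewrite /deg (leq_trans (subset_leq_card sub)) // (leq_trans (leq_card_setU _ _).1) //.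
by rewrite -[3]/(2 + 1) leq_add // cards2 ltnS leq_b1.
Qed.

End CrossingEdge.

End NonadjacentPair.

Hypotheses (conn : connected_graph e) (n_ge9 : 9 <= #|T|).
Hypothesis ore : forall u v, u != v -> ~~ e u v -> #|T| - 2 <= deg e u + deg e v.

Lemma rainbow_path_nonadjacent x y :
  x != y -> ~~ e x y -> (forall w, e x w -> ~~ e y w) -> exists p, rainbow_path e c x y p.
Proof.
move=> x_neq_y xy_nonadj nbr_disj; apply: NNPP => no_rainbow_ex.
have no_rainbow p : ~ rainbow_path e c x y p by move=> xyp; apply: no_rainbow_ex; exists p.
have no_rainbow_yx p : ~ rainbow_path e c y x p by move/rainbow_path_rev/no_rainbow.
have nbr_disj_yx w : e y w -> ~~ e x w by apply: contraTN; exact: nbr_disj.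
have ore_xy := ore x_neq_y xy_nonadj.
have cover := ore_cover e_sym e_irr x_neq_y xy_nonadj nbr_disj ore_xy.
have cover_yx w : w != y -> w != x -> e y w || e x w by move=> wy wx; rewrite orbC cover.
have [a [b [exa eab eby]]] :=
  nonadjacent_bridge e_sym e_irr x_neq_y xy_nonadj nbr_disj ore_xy (conn x y).
have deg_a := crossing_deg_le3 x_neq_y xy_nonadj nbr_disj exa eab eby cover no_rainbow.
have deg_b : deg e b <= 3.
  by apply: (@crossing_deg_le3 y x _ _ nbr_disj_yx b a _ _ _ cover_yx no_rainbow_yx);
    rewrite 1?eq_sym 1?e_sym.
have ore_ay : #|T| - 2 <= deg e a + deg e y.
  by apply: ore; [apply: contraNneq xy_nonadj => <- | rewrite e_sym nbr_disj].
have ore_bx : #|T| - 2 <= deg e b + deg e x.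
  by apply: ore; [apply: contraNneq xy_nonadj => <- | rewrite e_sym nbr_disj_yx // e_sym].
have := deg_disjoint_nbrs e_sym e_irr x_neq_y xy_nonadj nbr_disj.
lia.
Qed.

Lemma ore_rainbow_connected : rainbow_connected e c.
Proof.
move=> x y x_neq_y.
have [exy|xy_nonadj] := boolP (e x y); first by exists [:: y]; exact: rainbow_path_edge.
have [w /andP[exw ewy]|no_common] := pickP [pred w | e x w && e w y].
  by exists [:: w; y]; exact: rainbow_path_common_nbr.
apply: rainbow_path_nonadjacent => // w exw.
by have := no_common w; rewrite /= exw /= e_sym => ->.
Qed.

End ProperColouring.

Theorem proposition5p11 (T : finType) (e : rel T) :
  simple_graph e ->
  connected_graph e ->
  9 <= #|T| ->
  (forall u v : T, u != v -> ~~ e u v -> #|T| - 2 <= deg e u + deg e v) ->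
  exists k : nat, is_prc e k /\ is_chromatic_index e k.
Proof.
move=> [e_sym e_irr] conn n_ge9 ore.
have rainbowE k : proper_rainbow_k e k <-> proper_k_colourable e k.
  split=> [[c [ec pc _]]|[c [ec pc]]]; exists c => //; split=> //.
  by apply: ore_rainbow_connected => // x y /ec[].
have [k [colk k_min]] := is_least_exists (proper_k_colourable_exists e).
exists k; split=> //; split=> [|j /rainbowE]; [exact/rainbowE | exact: k_min].
Qed.
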